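(* Let $n>1$ be an integer and $\varphi(z)=z|z|^{n-2}$. For a constant $B>0$ consider the problem \[ \left(\varphi(u'(r))\right)'+\frac{n-1}{r}\varphi(u'(r))+Be^{u}=0 \quad (0<r<1),\qquad u'(0)=u(1)=0 . \] There is a constant $B(n)>0$ such that this problem has exactly two solutions for $0<B<B(n)$, exactly one solution for $B=B(n)$, and no solutions for $B>B(n)$.
   Context: With $\varphi(z)=z|z|^{p-2}$ and $p=n$, the operator $\left(\varphi(u')\right)'+\frac{n-1}{r}\varphi(u')$ is the radial $n$-Laplacian in $\mathbb{R}^n$; the problem is the radial Dirichlet problem on the unit ball. *)

From Stdlib Require Import Reals.
From Coquelicot Require Import Coquelicot.
Open Scope R_scope.

(* phi(z) = z |z|^(n-2), n a natural number >= 2 (so n-2 is a natural exponent;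
   for n = 2, |z|^0 = 1 and phi is the identity). *)
Definition phi (n : nat) (z : R) : R := z * (Rabs z) ^ (n - 2).

(* u is a solution of
     (phi(u'))' + (n-1)/r phi(u') + B e^u = 0  on (0,1),   u'(0) = u(1) = 0.
   Regularity: u is continuous on [0,1] (one-sided at the endpoints),
   differentiable on (0,1), phi(u') is differentiable on (0,1), the ODE holds
   pointwise on (0,1), u'(r) -> 0 as r -> 0+ (u'(0) = 0), and u(1) = 0. *)
Definition is_solution (n : nat) (B : R) (u : R -> R) : Prop :=
  filterlim u (at_right 0) (locally (u 0)) /\
  filterlim u (at_left 1) (locally (u 1)) /\
  (forall r, 0 < r < 1 ->
     ex_derive u r /\
     ex_derive (fun s => phi n (Derive u s)) r /\
     Derive (fun s => phi n (Derive u s)) r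
       + (INR n - 1) / r * phi n (Derive u r) + B * exp (u r) = 0) /\
  filterlim (Derive u) (at_right 0) (locally 0) /\
  u 1 = 0.

(* Solutions are functions on [0,1]: two functions are the same solution iff
   they agree on [0,1]. *)
Definition same_on01 (u v : R -> R) : Prop := forall r, 0 <= r <= 1 -> u r = v r.

Definition no_solution (n : nat) (B : R) : Prop :=
  forall u, ~ is_solution n B u.

Definition exactly_one_solution (n : nat) (B : R) : Prop :=
  exists u, is_solution n B u /\ forall v, is_solution n B v -> same_on01 v u.

Definition exactly_two_solutions (n : nat) (B : R) : Prop :=
  exists u1 u2, is_solution n B u1 /\ is_solution n B u2 /\ ~ same_on01 u1 u2 /\
    forall v, is_solution n B v -> same_on01 v u1 \/ same_on01 v u2.

(* For a solution u the flux r^(n-1) phi(u') has derivative -B r^(n-1) e^u and tends to 0 at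
   r = 0, so it is negative; hence u' < 0 and s = -r u' = (-flux)^(1/(n-1)) is differentiable.
   With s_max = n^2/(n-1) the equation has the two first integrals
     B r^n e^u = (n-1)/n s^(n-1) (s_max - s)   and   u - n ln (s_max - s) = const,
   whose constants are fixed at r = 0. Eliminating s gives
     u(r) = n ln (1 + b) - n ln (1 + b r^(n/(n-1))),   B = (n-1)/n s_max^n b^(n-1) / (1 + b)^n
   for some b > 0, and conversely each such u is a solution. So solutions correspond to the roots
   b > 0 of B = B_of b, and B_of increases on (0, n-1], decreases on [n-1, oo) and tends to 0 at
   both ends: B(n) = B_of (n-1). *)

From Stdlib Require Import Reals Lra Lia.
From Coquelicot Require Import Coquelicot.
Open Scope R_scope.

Section FilterlimR.
Context {T : Type} {F : (T -> Prop) -> Prop} {FF : Filter F}.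

Lemma filterlim_Rplus (f g : T -> R) (a b : R) :
  filterlim f F (locally a) -> filterlim g F (locally b) ->
  filterlim (fun x => f x + g x) F (locally (a + b)).
Proof. intros Hf Hg; exact (filterlim_comp_2 f g _ Hf Hg (filterlim_plus a b)). Qed.

Lemma filterlim_Rmult (f g : T -> R) (a b : R) :
  filterlim f F (locally a) -> filterlim g F (locally b) ->
  filterlim (fun x => f x * g x) F (locally (a * b)).
Proof. intros Hf Hg; exact (filterlim_comp_2 f g _ Hf Hg (filterlim_mult a b)). Qed.

Lemma filterlim_continuous_comp (f : T -> R) (h : R -> R) (a : R) :
  filterlim f F (locally a) -> continuous h a ->
  filterlim (fun x => h (f x)) F (locally (h a)).
Proof. intros Hf Hh; exact (filterlim_comp _ _ _ f h _ _ _ Hf Hh). Qed.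

End FilterlimR.

Lemma filterlim_id_within (D : R -> Prop) (a : R) :
  filterlim (fun x => x) (within D (locally a)) (locally a).
Proof. intros P HP; exact (filter_le_within D P HP). Qed.

Lemma at_right_interval (a b : R) : a < b -> at_right a (fun x => a < x < b).
Proof.
  intros Hab; exists (mkposreal (b - a) ltac:(lra)); intros y Hy Hay.
  change (Rabs (y - a) < b - a) in Hy; apply Rabs_def2 in Hy; lra.
Qed.

Lemma at_left_interval (a b : R) : a < b -> at_left b (fun x => a < x < b).
Proof.
  intros Hab; exists (mkposreal (b - a) ltac:(lra)); intros y Hy Hyb.
  change (Rabs (y - b) < b - a) in Hy; apply Rabs_def2 in Hy; lra.
Qed.

Lemma locally_gt (a x : R) : a < x -> locally x (fun y => a < y).
Proof.
  intros Hx; exists (mkposreal (x - a) ltac:(lra)); intros y Hy.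
  change (Rabs (y - x) < x - a) in Hy; apply Rabs_def2 in Hy; lra.
Qed.

Lemma filterlim_Rpower_at_right_0 (c : R) :
  0 < c -> filterlim (fun x => Rpower x c) (at_right 0) (locally 0).
Proof.
  intros Hc; apply filterlim_locally; intros eps.
  exists (mkposreal (Rpower eps (/ c)) (exp_pos _)); intros y Hy Hy0.
  change (Rabs (y - 0) < Rpower eps (/ c)) in Hy.
  change (Rabs (Rpower y c - 0) < eps).
  rewrite Rminus_0_r, Rabs_pos_eq in Hy by lra.
  rewrite Rminus_0_r, Rabs_pos_eq by apply Rlt_le, exp_pos.
  rewrite <- (Rpower_1 eps) by apply cond_pos.
  rewrite <- (Rinv_l c), <- Rpower_mult by lra.
  now apply Rlt_Rpower_l.
Qed.

Lemma filterlim_at_left_of_continuous (f : R -> R) (b : R) :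
  continuous f b -> filterlim f (at_left b) (locally (f b)).
Proof. intros Hf; exact (filterlim_comp _ _ _ _ f _ _ _ (filterlim_id_within _ b) Hf). Qed.

Lemma at_right_limit_unique (f : R -> R) (a l1 l2 : R) :
  filterlim f (at_right a) (locally l1) -> filterlim f (at_right a) (locally l2) -> l1 = l2.
Proof.
  apply (@filterlim_locally_unique _ _ R_NormedModule).
  apply Proper_StrongProper, at_right_proper_filter.
Qed.

Lemma at_left_limit_unique (f : R -> R) (b l1 l2 : R) :
  filterlim f (at_left b) (locally l1) -> filterlim f (at_left b) (locally l2) -> l1 = l2.
Proof.
  apply (@filterlim_locally_unique _ _ R_NormedModule).
  apply Proper_StrongProper, at_left_proper_filter.
Qed.

Lemma lt_of_derive_neg (f df : R -> R) (x y : R) : x < y ->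
  (forall c, x <= c <= y -> is_derive f c (df c)) ->
  (forall c, x < c < y -> df c < 0) -> f y < f x.
Proof.
  intros Hxy Hd Hneg.
  destruct (MVT_cor2 f df x y Hxy) as [c [Hc Hcxy]].
  { intros c Hc; apply is_derive_Reals, Hd, Hc. }
  specialize (Hneg c Hcxy); nra.
Qed.

Lemma lt_of_derive_pos (f df : R -> R) (x y : R) : x < y ->
  (forall c, x <= c <= y -> is_derive f c (df c)) ->
  (forall c, x < c < y -> 0 < df c) -> f x < f y.
Proof.
  intros Hxy Hd Hpos.
  destruct (MVT_cor2 f df x y Hxy) as [c [Hc Hcxy]].
  { intros c Hc; apply is_derive_Reals, Hd, Hc. }
  specialize (Hpos c Hcxy); nra.
Qed.

Lemma eq_of_derive_0_at_right (f : R -> R) (a b l : R) :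
  (forall x, a < x < b -> is_derive f x 0) ->
  filterlim f (at_right a) (locally l) -> forall x, a < x < b -> f x = l.
Proof.
  intros Hd Hl x Hx; apply (at_right_limit_unique f a); [|exact Hl].
  apply filterlim_ext_loc with (fun _ => f x); [|apply filterlim_const].
  apply filter_imp with (2 := at_right_interval a x (proj1 Hx)); intros y Hy.
  destruct (MVT_cor2 f (fun _ => 0) y x (proj2 Hy)) as [c [Hc _]].
  { intros c Hc; apply is_derive_Reals, Hd; lra. }
  lra.
Qed.

Lemma lt0_of_derive_neg_at_right (f df : R -> R) (a b : R) :
  (forall x, a < x < b -> is_derive f x (df x)) ->
  (forall x, a < x < b -> df x < 0) ->
  filterlim f (at_right a) (locally 0) -> forall x, a < x < b -> f x < 0.
Proof.
  intros Hd Hneg Hl x Hx.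
  set (y := (a + x) / 2).
  assert (Hdec : forall s t, a < s < t -> t <= x -> f t < f s).
  { intros s t Hst Ht; apply (lt_of_derive_neg f df); try lra.
    - intros c Hc; apply Hd; lra.
    - intros c Hc; apply Hneg; lra. }
  assert (Hy : f y <= 0).
  { assert (PF : ProperFilter' (at_right a))
      by apply Proper_StrongProper, at_right_proper_filter.
    apply (@filterlim_le _ _ PF (fun _ => f y) f (f y) 0).
    - apply filter_imp with (2 := at_right_interval a y ltac:(unfold y; lra)).
      intros s Hs; apply Rlt_le, Hdec; unfold y in *; lra.
    - apply filterlim_const.
    - exact Hl. }
  assert (f x < f y) by (apply Hdec; unfold y; lra).
  lra.
Qed.

Lemma IVT_strict (f : R -> R) (x y c : R) : x < y ->
  (forall a, x <= a <= y -> continuous f a) -> (f x - c) * (f y - c) < 0 ->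
  exists z, x < z < y /\ f z = c.
Proof.
  intros Hxy Hf Hsign.
  assert (Hx : f x - c <> 0) by (intros H; rewrite H in Hsign; lra).
  assert (Hy : f y - c <> 0) by (intros H; rewrite H in Hsign; lra).
  assert (Hc : forall a, continuity_pt (fun _ => c) a)
    by (intros a; apply continuity_pt_const; intros ? ?; reflexivity).
  assert (Hz : exists z, x <= z <= y /\ f z = c).
  { destruct (Rlt_or_le (f x - c) 0) as [Hxc|Hxc].
    - destruct (Ranalysis5.IVT_interv (fun t => f t - c) x y) as [z [Hz Hfz]]; try nra.
      + intros a Ha; apply continuity_pt_minus; [apply continuity_pt_filterlim, Hf, Ha|apply Hc].
      + exists z; split; [exact Hz|lra].
    - destruct (Ranalysis5.IVT_interv (fun t => c - f t) x y) as [z [Hz Hfz]]; try nra.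
      + intros a Ha; apply continuity_pt_minus; [apply Hc|apply continuity_pt_filterlim, Hf, Ha].
      + exists z; split; [exact Hz|lra]. }
  destruct Hz as [z [Hz Hfz]]; exists z; split; [|exact Hfz].
  assert (z <> x) by (intros ->; lra); assert (z <> y) by (intros ->; lra); lra.
Qed.

Lemma filterlim_pow_at_right_0 (m : nat) :
  filterlim (fun x => x ^ S m) (at_right 0) (locally 0).
Proof.
  assert (Hpow : continuous (fun x => x ^ S m) 0).
  { apply (ex_derive_continuous (V := R_NormedModule)); auto_derive; exact I. }
  assert (Hl := filterlim_continuous_comp _ _ _ (filterlim_id_within (fun x => 0 < x) 0) Hpow).
  cbv beta in Hl; now rewrite pow_i in Hl by lia.
Qed.

Lemma exp_INR_mul_ln_sub (m : nat) (x y : R) : 0 < x -> 0 < y ->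
  exp (INR m * ln x - INR m * ln y) = x ^ m / y ^ m.
Proof.
  intros Hx Hy; unfold Rminus; rewrite exp_plus, exp_Ropp.
  change (Rpower x (INR m) * / Rpower y (INR m) = x ^ m / y ^ m).
  now rewrite !Rpower_pow.
Qed.

Lemma continuous_phi (m : nat) (z : R) : continuous (phi m) z.
Proof.
  apply continuity_pt_filterlim; unfold phi.
  apply (continuity_pt_mult (fun x => x) (fun x => Rabs x ^ (m - 2))).
  - apply derivable_continuous_pt, derivable_pt_id.
  - apply (continuity_pt_comp Rabs (fun x => x ^ (m - 2))); [apply Rcontinuity_abs|].
    apply derivable_continuous_pt, derivable_pt_pow.
Qed.

Section ExponentN.
Variable k : nat.
(* Writing n = k + 2 makes the exponents n - 2 of phi and n - 1 of the flux syntactic. *)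
Local Notation n := (S (S k)).

Lemma INR_pred_n_pos : 0 < INR (S k).
Proof. apply lt_0_INR; lia. Qed.

Lemma INR_n_pos : 0 < INR n.
Proof. apply lt_0_INR; lia. Qed.

Definition root (x : R) : R := Rpower x (/ INR (S k)).

Lemma root_pow (x : R) : 0 < x -> root x ^ S k = x.
Proof.
  intros Hx; unfold root; rewrite <- Rpower_pow by apply exp_pos.
  rewrite Rpower_mult, Rinv_l, Rpower_1 by (auto; generalize INR_pred_n_pos; lra).
  reflexivity.
Qed.

Lemma pow_root (x : R) : 0 < x -> root (x ^ S k) = x.
Proof.
  intros Hx; unfold root; rewrite <- Rpower_pow by exact Hx.
  rewrite Rpower_mult, Rinv_r, Rpower_1 by (auto; generalize INR_pred_n_pos; lra).
  reflexivity.
Qed.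

Definition q : R := INR n / INR (S k).

Lemma q_pos : 0 < q.
Proof. apply Rdiv_lt_0_compat; [apply INR_n_pos | apply INR_pred_n_pos]. Qed.

Lemma Rpower_q (x : R) : 0 < x -> Rpower x q = x * root x.
Proof.
  intros Hx; unfold root, Rpower; rewrite <- (exp_ln x) at 2 by exact Hx.
  rewrite <- exp_plus; f_equal; unfold q; rewrite S_INR.
  field; generalize INR_pred_n_pos; lra.
Qed.

Definition smax : R := INR n * q.

Lemma smax_pos : 0 < smax.
Proof. apply Rmult_lt_0_compat; [apply INR_n_pos | apply q_pos]. Qed.

(* [Rpower 0 q] is [exp (q * ln 0)] = 1, hence the separate branch. *)
Definition powq (x : R) : R := if Rle_dec x 0 then 0 else Rpower x q.

Definition U (b r : R) : R := INR n * ln (1 + b) - INR n * ln (1 + b * powq r).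

Definition Bscale : R := INR (S k) / INR n * smax ^ n.

Definition B_of (b : R) : R := Bscale * (b ^ S k / (1 + b) ^ n).

Lemma U_at_0 (b : R) : U b 0 = INR n * ln (1 + b).
Proof.
  unfold U, powq; destruct (Rle_dec 0 0); [|lra].
  rewrite Rmult_0_r, Rplus_0_r, ln_1; ring.
Qed.

Lemma U_at_1 (b : R) : U b 1 = 0.
Proof.
  unfold U, powq; destruct (Rle_dec 1 0); [lra|].
  unfold Rpower; rewrite ln_1, Rmult_0_r, exp_0, Rmult_1_r; ring.
Qed.

Lemma U_pos_eq (b r : R) : 0 < r -> U b r = INR n * ln (1 + b) - INR n * ln (1 + b * Rpower r q).
Proof. intros Hr; unfold U, powq; destruct (Rle_dec r 0); [lra | reflexivity]. Qed.

(** * The explicit solutions *)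

Section Family.
Variable b : R.
Hypothesis Hb : 0 < b.

Lemma denom_pos (r : R) : 0 < r -> 0 < 1 + b * Rpower r q.
Proof.
  intros Hr; generalize (Rmult_lt_0_compat _ _ Hb (exp_pos (q * ln r))); unfold Rpower; lra.
Qed.

Definition dU (r : R) : R := - (INR n * b * q * root r) / (1 + b * Rpower r q).

Lemma is_derive_U (r : R) : 0 < r -> is_derive (U b) r (dU r).
Proof.
  intros Hr.
  apply is_derive_ext_loc with
    (fun y => INR n * ln (1 + b) - INR n * ln (1 + b * Rpower y q)).
  { apply filter_imp with (2 := locally_gt 0 r Hr); intros y Hy; now rewrite U_pos_eq. }
  assert (HD := denom_pos r Hr); unfold Rpower; auto_derive.
  - change (exp (q * ln r)) with (Rpower r q); repeat split; lra.
  - change (exp (q * ln r)) with (Rpower r q).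
    change (match k with 0%nat => 1 | S _ => INR k + 1 end + 1) with (INR n).
    unfold dU; rewrite Rpower_q in * by exact Hr; field; lra.
Qed.

Definition psiU (r : R) : R := - (INR n * b * q) ^ S k * r / (1 + b * Rpower r q) ^ S k.

Lemma phi_dU (r : R) : 0 < r -> phi n (dU r) = psiU r.
Proof.
  intros Hr; assert (HD := denom_pos r Hr).
  assert (Ha : 0 < INR n * b * q * root r / (1 + b * Rpower r q)).
  { apply Rdiv_lt_0_compat; [|exact HD].
    apply Rmult_lt_0_compat; [|apply exp_pos].
    apply Rmult_lt_0_compat; [apply Rmult_lt_0_compat|]; auto using INR_n_pos, q_pos. }
  unfold phi, dU, psiU; replace (n - 2)%nat with k by lia.
  rewrite Rdiv_opp_l, Rabs_Ropp, Rabs_pos_eq by lra.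
  rewrite <- Ropp_mult_distr_l, !tech_pow_Rmult.
  unfold Rdiv; rewrite !Rpow_mult_distr, pow_inv, root_pow by exact Hr.
  field; apply pow_nonzero; lra.
Qed.

Lemma is_derive_psiU (r : R) : 0 < r ->
  is_derive psiU r (- ((INR n - 1) / r * psiU r) - B_of b * exp (U b r)).
Proof.
  intros Hr; assert (HD := denom_pos r Hr).
  rewrite U_pos_eq by exact Hr.
  rewrite exp_INR_mul_ln_sub by lra.
  unfold psiU, B_of, Bscale, smax; unfold Rpower; auto_derive.
  - change (exp (q * ln r)) with (Rpower r q); repeat split; try lra.
    apply (pow_nonzero _ (S k)); lra.
  - change (exp (q * ln r)) with (Rpower r q).
    change (match k with 0%nat => 1 | S _ => INR k + 1 end) with (INR (S k)).
    change (INR (S k) + 1) with (INR n).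
    assert (Hm := INR_pred_n_pos); assert (HN : INR n = INR (S k) + 1) by apply S_INR.
    set (P := Rpower r q) in *; unfold q; rewrite HN; rewrite !Rpow_mult_distr, <- !tech_pow_Rmult.
    field; repeat split; try lra; apply pow_nonzero; lra.
Qed.

Lemma Derive_U (r : R) : 0 < r -> Derive (U b) r = dU r.
Proof. intros Hr; apply is_derive_unique, is_derive_U, Hr. Qed.

Lemma is_derive_phi_Derive_U (r : R) : 0 < r ->
  is_derive (fun s : R => phi n (Derive (U b) s)) r
    (- ((INR n - 1) / r * psiU r) - B_of b * exp (U b r)).
Proof.
  intros Hr; apply is_derive_ext_loc with psiU; [|now apply is_derive_psiU].
  apply filter_imp with (2 := locally_gt 0 r Hr); intros s Hs.
  now rewrite Derive_U, phi_dU.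
Qed.

Lemma U_at_right_0 : filterlim (U b) (at_right 0) (locally (U b 0)).
Proof.
  set (h := fun t => INR n * ln (1 + b) - INR n * ln (1 + b * t)).
  assert (Hh : continuous h 0).
  { apply (ex_derive_continuous (V := R_NormedModule)); unfold h; auto_derive; lra. }
  replace (U b 0) with (h 0)
    by (rewrite U_at_0; unfold h; rewrite Rmult_0_r, Rplus_0_r, ln_1; ring).
  apply filterlim_ext_loc with (fun r => h (Rpower r q)).
  { apply filter_imp with (2 := at_right_interval 0 1 Rlt_0_1); intros r Hr.
    now rewrite U_pos_eq by lra. }
  exact (filterlim_continuous_comp _ h 0 (filterlim_Rpower_at_right_0 q q_pos) Hh).
Qed.

Lemma Derive_U_at_right_0 : filterlim (Derive (U b)) (at_right 0) (locally 0).
Proof.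
  set (c := - (INR n * b * q)).
  apply filterlim_ext_loc with (fun r => c * root r * / (1 + b * Rpower r q)).
  { apply filter_imp with (2 := at_right_interval 0 1 Rlt_0_1); intros r Hr.
    rewrite Derive_U by lra; unfold dU, c; field; generalize (denom_pos r (proj1 Hr)); lra. }
  assert (Hinv : continuous (fun t => / (1 + b * t)) 0).
  { apply (ex_derive_continuous (V := R_NormedModule)); auto_derive; lra. }
  assert (Hl := filterlim_Rmult _ _ _ _
    (filterlim_Rmult _ _ _ _ (filterlim_const c)
       (filterlim_Rpower_at_right_0 _ (Rinv_0_lt_compat _ INR_pred_n_pos)))
    (filterlim_continuous_comp _ _ _ (filterlim_Rpower_at_right_0 q q_pos) Hinv)).
  now rewrite Rmult_0_r, Rmult_0_l in Hl.
Qed.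

Lemma U_is_solution : is_solution n (B_of b) (U b).
Proof.
  split; [exact U_at_right_0|split; [|split; [|split]]].
  - apply filterlim_at_left_of_continuous, (ex_derive_continuous (V := R_NormedModule)).
    eexists; apply is_derive_U; lra.
  - intros r Hr; split; [|split].
    + eexists; apply is_derive_U; lra.
    + eexists; apply is_derive_phi_Derive_U; lra.
    + rewrite (is_derive_unique _ _ _ (is_derive_phi_Derive_U r (proj1 Hr))).
      rewrite Derive_U, phi_dU by lra; ring.
  - exact Derive_U_at_right_0.
  - apply U_at_1.
Qed.

End Family.

(** * Every solution is explicit *)

Section Classification.
Variables (B : R) (u : R -> R).
Hypothesis HB : 0 < B.
Hypothesis Hsol : is_solution n B u.

Lemma is_derive_u (r : R) : 0 < r < 1 -> is_derive u r (Derive u r).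
Proof.
  destruct Hsol as (_ & _ & Hode & _); intros Hr.
  apply Derive_correct, (Hode r Hr).
Qed.

Definition flux (r : R) : R := r ^ S k * phi n (Derive u r).

Lemma is_derive_flux (r : R) : 0 < r < 1 -> is_derive flux r (- B * r ^ S k * exp (u r)).
Proof.
  destruct Hsol as (_ & _ & Hsol_ode & _); intros Hr.
  destruct (Hsol_ode r Hr) as [_ [Hphi Hode]].
  pose (ps := fun s => phi n (Derive u s)).
  change (is_derive (fun x => x ^ S k * ps x) r (- B * r ^ S k * exp (u r))).
  change (ex_derive ps r) in Hphi.
  change (Derive ps r + (INR n - 1) / r * ps r + B * exp (u r) = 0) in Hode.
  clearbody ps; auto_derive; [exact Hphi|].
  change (match k with 0%nat => 1 | S _ => INR k + 1 end) with (INR (S k)).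
  change (INR n) with (INR (S k) + 1) in Hode.
  change (Derive (fun x => ps x) r) with (Derive ps r).
  replace (Derive ps r) with (- (INR (S k) / r * ps r) - B * exp (u r)) by lra.
  rewrite <- tech_pow_Rmult; field; lra.
Qed.

Lemma flux_at_right_0 : filterlim flux (at_right 0) (locally 0).
Proof.
  destruct Hsol as (_ & _ & _ & Hdu0 & _).
  assert (Hl := filterlim_Rmult _ _ _ _ (filterlim_pow_at_right_0 k)
    (filterlim_continuous_comp _ _ _ Hdu0 (continuous_phi n 0))).
  now rewrite Rmult_0_l in Hl.
Qed.

Lemma flux_neg (r : R) : 0 < r < 1 -> flux r < 0.
Proof.
  apply (lt0_of_derive_neg_at_right _ _ 0 1 is_derive_flux); [|exact flux_at_right_0].
  intros x Hx; assert (0 < B * x ^ S k * exp (u x)); [|lra].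
  apply Rmult_lt_0_compat; [apply Rmult_lt_0_compat, pow_lt|apply exp_pos]; lra.
Qed.

Lemma Derive_u_neg (r : R) : 0 < r < 1 -> Derive u r < 0.
Proof.
  intros Hr; generalize (flux_neg r Hr); unfold flux, phi; replace (n - 2)%nat with k by lia.
  intros Hf; destruct (Rlt_or_le (Derive u r) 0) as [Hd|Hd]; [exact Hd|].
  assert (0 <= r ^ S k * (Derive u r * Rabs (Derive u r) ^ k)); [|lra].
  apply Rmult_le_pos; [apply pow_le; lra|apply Rmult_le_pos; [exact Hd|apply pow_le, Rabs_pos]].
Qed.

Definition sigma (r : R) : R := - r * Derive u r.

Lemma sigma_pos (r : R) : 0 < r < 1 -> 0 < sigma r.
Proof. intros Hr; generalize (Derive_u_neg r Hr); unfold sigma; nra. Qed.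

Lemma opp_flux_eq (r : R) : 0 < r < 1 -> - flux r = sigma r ^ S k.
Proof.
  intros Hr; generalize (Derive_u_neg r Hr); intros Hd.
  unfold flux, phi, sigma; replace (n - 2)%nat with k by lia.
  rewrite Rabs_left by exact Hd; replace (- r * Derive u r) with (r * - Derive u r) by ring.
  rewrite Rpow_mult_distr, <- !tech_pow_Rmult; ring.
Qed.

Lemma root_opp_flux (r : R) : 0 < r < 1 -> root (- flux r) = sigma r.
Proof. intros Hr; rewrite opp_flux_eq by exact Hr; apply pow_root, sigma_pos, Hr. Qed.

(* sigma is written as root (- flux): the flux is differentiable, Derive u need not be. *)
Definition energy (r : R) : R :=
  B * r ^ n * exp (u r) - INR n * (- flux r) + INR (S k) / INR n * (- flux r * root (- flux r)).

Lemma is_derive_energy (r : R) : 0 < r < 1 -> is_derive energy r 0.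
Proof.
  intros Hr; assert (Hf := flux_neg r Hr).
  assert (Hdf := is_derive_flux r Hr); assert (Hdu := is_derive_u r Hr).
  unfold energy, root, Rpower; auto_derive.
  - repeat split; first [exact (ex_intro _ _ Hdu) | exact (ex_intro _ _ Hdf) | lra].
  - change (match k with 0%nat => 1 | S _ => INR k + 1 end) with (INR (S k)).
    change (exp (/ INR (S k) * ln (- flux r))) with (root (- flux r)).
    change (Derive (fun x => u x) r) with (Derive u r).
    change (Derive (fun x => flux x) r) with (Derive flux r).
    rewrite root_opp_flux, (is_derive_unique _ _ _ Hdf) by exact Hr; unfold sigma.
    assert (Hm := INR_pred_n_pos).
    rewrite <- tech_pow_Rmult; field; repeat split; lra.
Qed.

Lemma r_Derive_u_at_right_0 : filterlim (fun r => r * Derive u r) (at_right 0) (locally 0).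
Proof.
  destruct Hsol as (_ & _ & _ & Hdu0 & _).
  assert (Hl := filterlim_Rmult _ _ _ _ (filterlim_id_within _ 0) Hdu0).
  now rewrite Rmult_0_l in Hl.
Qed.

Lemma energy_at_right_0 : filterlim energy (at_right 0) (locally 0).
Proof.
  apply filterlim_ext_loc with (fun r =>
    B * r ^ n * exp (u r) + INR n * flux r + INR (S k) / INR n * (flux r * (r * Derive u r))).
  { apply filter_imp with (2 := at_right_interval 0 1 Rlt_0_1); intros r Hr.
    unfold energy; rewrite root_opp_flux by exact Hr; unfold sigma; ring. }
  destruct Hsol as (Hu0 & _).
  assert (Hl := filterlim_Rplus _ _ _ _
    (filterlim_Rplus _ _ _ _
      (filterlim_Rmult _ _ _ _
        (filterlim_Rmult _ _ _ _ (filterlim_const B) (filterlim_pow_at_right_0 (S k)))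
        (filterlim_continuous_comp _ _ _ Hu0 (continuous_exp (u 0))))
      (filterlim_Rmult _ _ _ _ (filterlim_const (INR n)) flux_at_right_0))
    (filterlim_Rmult _ _ _ _ (filterlim_const (INR (S k) / INR n))
      (filterlim_Rmult _ _ _ _ flux_at_right_0 r_Derive_u_at_right_0))).
  now replace (B * 0 * exp (u 0) + INR n * 0 + INR (S k) / INR n * (0 * 0)) with 0 in Hl by ring.
Qed.

Lemma energy_identity (r : R) : 0 < r < 1 ->
  B * r ^ n * exp (u r) = sigma r ^ S k * (INR (S k) / INR n) * (smax - sigma r).
Proof.
  intros Hr; generalize (eq_of_derive_0_at_right _ 0 1 0 is_derive_energy energy_at_right_0 r Hr).
  unfold energy; rewrite root_opp_flux, opp_flux_eq by exact Hr.
  unfold smax, q; assert (Hm := INR_pred_n_pos); assert (HN := INR_n_pos).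
  intros H; apply Rminus_diag_uniq; rewrite <- H; field; lra.
Qed.

Lemma sigma_lt_smax (r : R) : 0 < r < 1 -> sigma r < smax.
Proof.
  intros Hr; generalize (energy_identity r Hr).
  assert (Hl : 0 < B * r ^ n * exp (u r)).
  { apply Rmult_lt_0_compat; [apply Rmult_lt_0_compat, pow_lt|apply exp_pos]; lra. }
  assert (Hc : 0 < sigma r ^ S k * (INR (S k) / INR n)).
  { apply Rmult_lt_0_compat; [apply pow_lt, sigma_pos, Hr|].
    apply Rdiv_lt_0_compat; [apply INR_pred_n_pos|apply INR_n_pos]. }
  intros H; destruct (Rlt_or_le (sigma r) smax) as [Hs|Hs]; [exact Hs|nra].
Qed.

Definition potential (r : R) : R := u r - INR n * ln (smax - root (- flux r)).

Lemma is_derive_potential (r : R) : 0 < r < 1 -> is_derive potential r 0.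
Proof.
  intros Hr; assert (Hf := flux_neg r Hr); assert (Hs := sigma_pos r Hr).
  assert (Hsm := sigma_lt_smax r Hr).
  assert (Hdf := is_derive_flux r Hr); assert (Hdu := is_derive_u r Hr).
  unfold potential, root, Rpower; auto_derive.
  - change (match k with 0%nat => 1 | S _ => INR k + 1 end) with (INR (S k)).
    change (exp (/ INR (S k) * ln (- flux r))) with (root (- flux r)).
    rewrite root_opp_flux by exact Hr.
    repeat split; first [exact (ex_intro _ _ Hdu) | exact (ex_intro _ _ Hdf) | lra].
  - change (match k with 0%nat => 1 | S _ => INR k + 1 end) with (INR (S k)).
    change (exp (/ INR (S k) * ln (- flux r))) with (root (- flux r)).
    change (Derive (fun x => u x) r) with (Derive u r).
    change (Derive (fun x => flux x) r) with (Derive flux r).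
    rewrite root_opp_flux, (is_derive_unique _ _ _ Hdf) by exact Hr.
    assert (HB' : B = sigma r ^ S k * (INR (S k) / INR n) * (smax - sigma r) / (r ^ n * exp (u r))).
    { rewrite <- energy_identity by exact Hr; field; split; [apply Rgt_not_eq, exp_pos|].
      apply pow_nonzero; lra. }
    replace (Derive u r) with (- sigma r / r) by (unfold sigma; field; lra).
    rewrite HB', opp_flux_eq by exact Hr.
    assert (Hm := INR_pred_n_pos); assert (HN := INR_n_pos).
    assert (exp (u r) <> 0) by (apply Rgt_not_eq, exp_pos).
    change (INR n) with (INR (S k) + 1) in *.
    rewrite <- !tech_pow_Rmult; field; repeat split; try lra; apply pow_nonzero; lra.
Qed.

Lemma potential_at_right_0 : filterlim potential (at_right 0) (locally (u 0 - INR n * ln smax)).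
Proof.
  apply filterlim_ext_loc with (fun r => u r + - INR n * ln (smax + r * Derive u r)).
  { apply filter_imp with (2 := at_right_interval 0 1 Rlt_0_1); intros r Hr.
    unfold potential; rewrite root_opp_flux by exact Hr; unfold sigma.
    replace (smax - - r * Derive u r) with (smax + r * Derive u r) by ring; ring. }
  assert (Hln : continuous ln (smax + 0))
    by (apply continuous_ln; rewrite Rplus_0_r; apply smax_pos).
  destruct Hsol as (Hu0 & _).
  assert (Hl := filterlim_Rplus _ _ _ _ Hu0
    (filterlim_Rmult _ _ _ _ (filterlim_const (- INR n))
      (filterlim_continuous_comp _ _ _
        (filterlim_Rplus _ _ _ _ (filterlim_const smax) r_Derive_u_at_right_0) Hln))).
  now rewrite Rplus_0_r, <- Ropp_mult_distr_l in Hl.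
Qed.

Lemma u_eq_sigma (r : R) : 0 < r < 1 ->
  u r = u 0 + (INR n * ln (smax - sigma r) - INR n * ln smax).
Proof.
  intros Hr.
  generalize (eq_of_derive_0_at_right _ 0 1 _ is_derive_potential potential_at_right_0 r Hr).
  unfold potential; rewrite root_opp_flux by exact Hr; lra.
Qed.

Definition csol : R := B * exp (u 0) * INR n / (INR (S k) * smax ^ n).

Lemma csol_pos : 0 < csol.
Proof.
  assert (Hm := INR_pred_n_pos); assert (HN := INR_n_pos); assert (Hsmax := smax_pos).
  apply Rdiv_lt_0_compat; [|apply Rmult_lt_0_compat, pow_lt; lra].
  apply Rmult_lt_0_compat; [apply Rmult_lt_0_compat, exp_pos|]; lra.
Qed.

Definition bsol : R := root csol.

Lemma bsol_pos : 0 < bsol.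
Proof. apply exp_pos. Qed.

Lemma sigma_ratio_pow (r : R) : 0 < r < 1 ->
  (sigma r / (smax - sigma r)) ^ S k = csol * r ^ n.
Proof.
  intros Hr; assert (Hs := sigma_pos r Hr); assert (Hsm := sigma_lt_smax r Hr).
  assert (Hm := INR_pred_n_pos); assert (HN := INR_n_pos); assert (Hsmax := smax_pos).
  assert (He := energy_identity r Hr).
  rewrite u_eq_sigma, exp_plus, exp_INR_mul_ln_sub in He by lra.
  assert (Hsk : sigma r ^ S k = B * r ^ n * (exp (u 0) * ((smax - sigma r) ^ n / smax ^ n))
                                / (INR (S k) / INR n * (smax - sigma r))).
  { rewrite He; field; lra. }
  unfold csol, Rdiv at 1; rewrite Rpow_mult_distr, pow_inv, Hsk.
  rewrite <- !tech_pow_Rmult; field.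
  repeat split; try lra; apply pow_nonzero; lra.
Qed.

Lemma sigma_ratio (r : R) : 0 < r < 1 -> sigma r / (smax - sigma r) = bsol * Rpower r q.
Proof.
  intros Hr; assert (Hs := sigma_pos r Hr); assert (Hsm := sigma_lt_smax r Hr).
  rewrite <- (pow_root (sigma r / (smax - sigma r))) by (apply Rdiv_lt_0_compat; lra).
  rewrite <- (pow_root (bsol * Rpower r q)) by (apply Rmult_lt_0_compat; apply exp_pos).
  f_equal; unfold bsol.
  rewrite sigma_ratio_pow, Rpow_mult_distr, root_pow, Rpower_q, Rpow_mult_distr, root_pow
    by (exact csol_pos || lra).
  rewrite <- tech_pow_Rmult; ring.
Qed.

Lemma u_explicit (r : R) : 0 < r < 1 -> u r = u 0 - INR n * ln (1 + bsol * Rpower r q).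
Proof.
  intros Hr; assert (Hs := sigma_pos r Hr); assert (Hsm := sigma_lt_smax r Hr).
  rewrite <- sigma_ratio, u_eq_sigma by exact Hr.
  replace (1 + sigma r / (smax - sigma r)) with (smax / (smax - sigma r)) by (field; lra).
  rewrite ln_div by lra; ring.
Qed.

Lemma u_at_0 : u 0 = INR n * ln (1 + bsol).
Proof.
  destruct Hsol as (_ & Hu1 & _ & _ & Hu1_eq).
  set (m := fun r => u 0 - INR n * ln (1 + bsol * Rpower r q)).
  assert (Hm : filterlim u (at_left 1) (locally (m 1))).
  { apply filterlim_ext_loc with m.
    { apply filter_imp with (2 := at_left_interval 0 1 Rlt_0_1); intros r Hr.
      symmetry; apply u_explicit, Hr. }
    apply filterlim_at_left_of_continuous, (ex_derive_continuous (V := R_NormedModule)).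
    assert (Hb := bsol_pos); unfold m, Rpower; auto_derive.
    rewrite ln_1, Rmult_0_r, exp_0; repeat split; lra. }
  generalize (at_left_limit_unique u 1 _ _ Hu1 Hm).
  unfold m, Rpower; rewrite ln_1, Rmult_0_r, exp_0, Rmult_1_r, Hu1_eq; lra.
Qed.

Lemma B_eq_B_of_bsol : B = B_of bsol.
Proof.
  assert (Hm := INR_pred_n_pos); assert (HN := INR_n_pos); assert (Hb := bsol_pos).
  assert (Hexp : exp (u 0) = (1 + bsol) ^ n) by (rewrite u_at_0; apply Rpower_pow; lra).
  unfold B_of, Bscale; unfold bsol at 1; rewrite root_pow by exact csol_pos.
  unfold csol; rewrite Hexp; field.
  repeat split; try lra; apply pow_nonzero; generalize smax_pos; lra.
Qed.

Lemma u_eq_U : same_on01 u (U bsol).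
Proof.
  destruct Hsol as (_ & _ & _ & _ & Hu1_eq); intros r Hr.
  destruct (Req_dec r 0) as [->|Hr0]; [rewrite U_at_0; exact u_at_0|].
  destruct (Req_dec r 1) as [->|Hr1]; [rewrite U_at_1; exact Hu1_eq|].
  rewrite u_explicit, U_pos_eq, u_at_0 by lra; reflexivity.
Qed.

End Classification.

Lemma solution_classification (B : R) (u : R -> R) : 0 < B -> is_solution n B u ->
  exists b, 0 < b /\ B = B_of b /\ same_on01 u (U b).
Proof.
  intros HB Hsol; exists (bsol B u); split; [apply bsol_pos|split].
  - now apply B_eq_B_of_bsol.
  - now apply u_eq_U.
Qed.

(** * Shape of B_of *)

Lemma Bscale_pos : 0 < Bscale.
Proof.
  apply Rmult_lt_0_compat; [|apply pow_lt, smax_pos].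
  apply Rdiv_lt_0_compat; [apply INR_pred_n_pos|apply INR_n_pos].
Qed.

Lemma B_of_pos (b : R) : 0 < b -> 0 < B_of b.
Proof.
  intros Hb; apply Rmult_lt_0_compat; [apply Bscale_pos|].
  apply Rdiv_lt_0_compat; apply pow_lt; lra.
Qed.

Definition dB_of (b : R) : R := Bscale * (b ^ k * (INR (S k) - b) / (1 + b) ^ S n).

Lemma is_derive_B_of (b : R) : 0 < b -> is_derive B_of b (dB_of b).
Proof.
  intros Hb; unfold B_of, dB_of; auto_derive.
  - apply (pow_nonzero _ n); lra.
  - change (match k with 0%nat => 1 | S _ => INR k + 1 end) with (INR (S k)).
    rewrite <- !tech_pow_Rmult; field; repeat split; try lra; apply pow_nonzero; lra.
Qed.

Lemma B_of_continuous (b : R) : 0 < b -> continuous B_of b.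
Proof.
  intros Hb; apply (ex_derive_continuous (V := R_NormedModule)).
  eexists; apply is_derive_B_of, Hb.
Qed.

Lemma B_of_increasing (x y : R) : 0 < x < y -> y <= INR (S k) -> B_of x < B_of y.
Proof.
  intros Hxy Hy; apply (lt_of_derive_pos _ dB_of x y (proj2 Hxy)).
  - intros c Hc; apply is_derive_B_of; lra.
  - intros c Hc; unfold dB_of; apply Rmult_lt_0_compat; [apply Bscale_pos|].
    apply Rdiv_lt_0_compat; [apply Rmult_lt_0_compat; [apply pow_lt|]|apply pow_lt]; lra.
Qed.

Lemma B_of_decreasing (x y : R) : INR (S k) <= x < y -> B_of y < B_of x.
Proof.
  intros Hxy; assert (Hm := INR_pred_n_pos).
  apply (lt_of_derive_neg _ dB_of x y (proj2 Hxy)).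
  - intros c Hc; apply is_derive_B_of; lra.
  - intros c Hc; unfold dB_of; assert (Hs := Bscale_pos).
    assert (0 < c ^ k * (c - INR (S k)) / (1 + c) ^ S n).
    { apply Rdiv_lt_0_compat; [apply Rmult_lt_0_compat; [apply pow_lt|]|apply pow_lt]; lra. }
    replace (c ^ k * (INR (S k) - c)) with (- (c ^ k * (c - INR (S k)))) by ring.
    rewrite Rdiv_opp_l; nra.
Qed.

Lemma B_of_lt_max (b : R) : 0 < b -> b <> INR (S k) -> B_of b < B_of (INR (S k)).
Proof.
  intros Hb Hbm; destruct (Rlt_or_le b (INR (S k))) as [Hlt|Hge].
  - apply B_of_increasing; lra.
  - apply B_of_decreasing; lra.
Qed.

Lemma B_of_le_linear (b : R) : 0 < b <= 1 -> B_of b <= Bscale * b.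
Proof.
  intros Hb; apply Rmult_le_compat_l; [apply Rlt_le, Bscale_pos|].
  assert (Hk : b ^ k <= 1) by (rewrite <- (pow1 k); apply pow_incr; lra).
  assert (Hn : 1 <= (1 + b) ^ n) by (apply pow_R1_Rle; lra).
  apply Rmult_le_reg_r with ((1 + b) ^ n); [lra|].
  unfold Rdiv; rewrite Rmult_assoc, Rinv_l, Rmult_1_r by lra.
  simpl pow at 1; generalize (pow_lt b k (proj1 Hb)); nra.
Qed.

Lemma B_of_mul_succ_le (b : R) : 0 < b -> B_of b * (1 + b) <= Bscale.
Proof.
  intros Hb; assert (Hs := Bscale_pos).
  assert (Hle : b ^ S k <= (1 + b) ^ S k) by (apply pow_incr; lra).
  assert (Hpos : 0 < (1 + b) ^ S k) by (apply pow_lt; lra).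
  unfold B_of; rewrite <- (tech_pow_Rmult (1 + b) (S k)).
  replace (Bscale * (b ^ S k / ((1 + b) * (1 + b) ^ S k)) * (1 + b))
    with (Bscale * (b ^ S k / (1 + b) ^ S k)) by (field; lra).
  rewrite <- (Rmult_1_r Bscale) at 2; apply Rmult_le_compat_l; [lra|].
  apply Rmult_le_reg_r with ((1 + b) ^ S k); [lra|].
  unfold Rdiv; rewrite Rmult_assoc, Rinv_l by lra; lra.
Qed.

Lemma B_of_root_below (B : R) : 0 < B < B_of (INR (S k)) ->
  exists a, 0 < a < INR (S k) /\ B_of a = B.
Proof.
  intros HB; assert (Hs := Bscale_pos); assert (Hm : 1 <= INR (S k)) by (apply (le_INR 1); lia).
  set (b0 := Rmin (1 / 2) (B / (2 * Bscale))).
  assert (Hb0 : 0 < b0) by (apply Rmin_pos; [lra|apply Rdiv_lt_0_compat; lra]).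
  assert (Hb0_half : b0 <= 1 / 2) by apply Rmin_l.
  assert (Hb0B : B_of b0 < B).
  { apply Rle_lt_trans with (Bscale * b0); [apply B_of_le_linear; lra|].
    apply Rle_lt_trans with (Bscale * (B / (2 * Bscale))).
    - apply Rmult_le_compat_l; [lra|apply Rmin_r].
    - replace (Bscale * (B / (2 * Bscale))) with (B / 2) by (field; lra); lra. }
  destruct (IVT_strict B_of b0 (INR (S k)) B) as [a [Ha HaB]].
  - lra.
  - intros a Ha; apply B_of_continuous; lra.
  - nra.
  - exists a; split; [lra|exact HaB].
Qed.

Lemma B_of_root_above (B : R) : 0 < B < B_of (INR (S k)) ->
  exists a, INR (S k) < a /\ B_of a = B.
Proof.
  intros HB; assert (Hs := Bscale_pos); assert (Hm := INR_pred_n_pos).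
  set (b1 := Bscale / B).
  assert (Hb1 : 0 < b1) by (apply Rdiv_lt_0_compat; lra).
  assert (Hb1B : B_of (INR (S k) + b1) < B).
  { assert (Hle := B_of_mul_succ_le (INR (S k) + b1) ltac:(lra)).
    assert (Hpos := B_of_pos (INR (S k) + b1) ltac:(lra)).
    assert (Hgt : Bscale < B * (1 + (INR (S k) + b1))).
    { replace (B * (1 + (INR (S k) + b1))) with (B * (1 + INR (S k)) + Bscale)
        by (unfold b1; field; lra).
      nra. }
    nra. }
  destruct (IVT_strict B_of (INR (S k)) (INR (S k) + b1) B) as [a [Ha HaB]].
  - lra.
  - intros a Ha; apply B_of_continuous; lra.
  - nra.
  - exists a; split; [lra|exact HaB].
Qed.

Lemma B_of_injective_below (a b : R) : 0 < a <= INR (S k) -> 0 < b <= INR (S k) ->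
  B_of a = B_of b -> a = b.
Proof.
  intros Ha Hb Hab; destruct (Rtotal_order a b) as [Hlt|[Heq|Hgt]]; [|exact Heq|].
  - generalize (B_of_increasing a b (conj (proj1 Ha) Hlt) (proj2 Hb)); lra.
  - generalize (B_of_increasing b a (conj (proj1 Hb) Hgt) (proj2 Ha)); lra.
Qed.

Lemma B_of_injective_above (a b : R) : INR (S k) <= a -> INR (S k) <= b ->
  B_of a = B_of b -> a = b.
Proof.
  intros Ha Hb Hab; destruct (Rtotal_order a b) as [Hlt|[Heq|Hgt]]; [|exact Heq|].
  - generalize (B_of_decreasing a b (conj Ha Hlt)); lra.
  - generalize (B_of_decreasing b a (conj Hb Hgt)); lra.
Qed.

Lemma U_distinct (a b : R) : 0 < a -> 0 < b -> a <> b -> ~ same_on01 (U a) (U b).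
Proof.
  intros Ha Hb Hab H; apply Hab.
  generalize (H 0 ltac:(lra)); rewrite !U_at_0; intros H0.
  apply Rmult_eq_reg_l, ln_inv in H0; try lra; apply Rgt_not_eq, INR_n_pos.
Qed.

End ExponentN.

Theorem proposition3p2 (n : nat) (hn : (1 < n)%nat) :
  exists Bn : R, 0 < Bn /\
    (forall B, 0 < B < Bn -> exactly_two_solutions n B) /\
    exactly_one_solution n Bn /\
    (forall B, Bn < B -> no_solution n B).
Proof.
  destruct n as [|[|k]]; [lia|lia|].
  assert (Hm := INR_pred_n_pos k).
  assert (Hmax := B_of_pos k (INR (S k)) Hm).
  exists (B_of k (INR (S k))); split; [exact Hmax|split; [|split]].
  - intros B HB.
    destruct (B_of_root_below k B HB) as [a1 [Ha1 HB1]].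
    destruct (B_of_root_above k B HB) as [a2 [Ha2 HB2]].
    exists (U k a1), (U k a2); split; [|split; [|split]].
    + rewrite <- HB1; apply U_is_solution; lra.
    + rewrite <- HB2; apply U_is_solution; lra.
    + apply U_distinct; lra.
    + intros v Hv; destruct (solution_classification k B v (proj1 HB) Hv) as [b [Hb [HBb Hvb]]].
      destruct (Rle_or_lt b (INR (S k))) as [Hbm|Hbm]; [left|right].
      * rewrite (B_of_injective_below k a1 b); [exact Hvb|lra|lra|congruence].
      * rewrite (B_of_injective_above k a2 b); [exact Hvb|lra|lra|congruence].
  - exists (U k (INR (S k))); split; [apply U_is_solution, Hm|].
    intros v Hv; destruct (solution_classification k _ v Hmax Hv) as [b [Hb [HBb Hvb]]].
    destruct (Req_dec b (INR (S k))) as [->|Hbm]; [exact Hvb|].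
    generalize (B_of_lt_max k b Hb Hbm); lra.
  - intros B HB v Hv; destruct (solution_classification k B v ltac:(lra) Hv) as [b [Hb [HBb _]]].
    destruct (Req_dec b (INR (S k))) as [->|Hbm]; [lra|].
    generalize (B_of_lt_max k b Hb Hbm); lra.
Qed.
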